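(* Let $(X,T)$ be a topological dynamical system and let $(K(X),T_K)$ be the induced system on the hyperspace. The following are equivalent: (1) $(K(X),T_K)$ is proximal; (2) $\bigcap_{n=0}^\infty T^nX$ is a singleton; (3) $X$ is a uniformly proximal set, i.e. for every $\varepsilon>0$ there is $n\in\mathbb{N}$ with $\operatorname{diam}(T^nX)<\varepsilon$.
   Context: A topological dynamical system $(X,T)$ consists of a non-empty compact metric space $(X,d)$ and a continuous map $T:X\to X$ (not necessarily surjective). $K(X)$ is the space of non-empty closed subsets of $X$ with the Hausdorff metric $d_H(A,B)=\max\{\max_{x\in A}\min_{y\in B}d(x,y),\max_{y\in B}\min_{x\in A}d(x,y)\}$, and $T_K(C)=T(C)$. A system is proximal if every pair $(u,v)$ satisfies $\liminf_{n\to\infty}\rho(T^nu,T^nv)=0$ for the relevant metric $\rho$. *)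

From Stdlib Require Import Reals.
Open Scope R_scope.

Record is_metric (X : Type) (d : X -> X -> R) : Prop := {
  metric_nonneg : forall x y, 0 <= d x y;
  metric_eq0 : forall x y, d x y = 0 <-> x = y;
  metric_sym : forall x y, d x y = d y x;
  metric_tri : forall x y z, d x z <= d x y + d y z
}.

Definition seq_conv {X : Type} (d : X -> X -> R) (u : nat -> X) (l : X) : Prop :=
  forall eps, 0 < eps -> exists N, forall n, (n >= N)%nat -> d (u n) l < eps.

(* Compactness of the metric space (X,d), as sequential compactness
   (equivalent to cover compactness for metric spaces). *)
Definition compact_space {X : Type} (d : X -> X -> R) : Prop :=
  forall u : nat -> X, exists (phi : nat -> nat) (l : X),
    (forall n, (phi n < phi (S n))%nat) /\ seq_conv d (fun n => u (phi n)) l.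

Definition continuous_map {X : Type} (d : X -> X -> R) (T : X -> X) : Prop :=
  forall x eps, 0 < eps -> exists delta, 0 < delta /\
    forall y, d x y < delta -> d (T x) (T y) < eps.

Definition TDS {X : Type} (d : X -> X -> R) (T : X -> X) : Prop :=
  inhabited X /\ is_metric X d /\ compact_space d /\ continuous_map d T.

Definition closed_set {X : Type} (d : X -> X -> R) (A : X -> Prop) : Prop :=
  forall u l, (forall n, A (u n)) -> seq_conv d u l -> A l.

Definition in_KX {X : Type} (d : X -> X -> R) (A : X -> Prop) : Prop :=
  (exists x, A x) /\ closed_set d A.

Fixpoint iter {X : Type} (n : nat) (T : X -> X) (x : X) : X :=
  match n with O => x | S m => T (iter m T x) end.

(* T_K^n A = T^n(A), the image set *)
Definition img_iter {X : Type} (T : X -> X) (n : nat) (A : X -> Prop) : X -> Prop :=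
  fun y => exists x, A x /\ iter n T x = y.

Definition is_glb (E : R -> Prop) (m : R) : Prop :=
  (forall x, E x -> m <= x) /\ (forall m', (forall x, E x -> m' <= x) -> m' <= m).

Definition pt_set_dist {X : Type} (d : X -> X -> R) (x : X) (B : X -> Prop) (r : R) : Prop :=
  is_glb (fun s => exists y, B y /\ s = d x y) r.

Definition excess {X : Type} (d : X -> X -> R) (A B : X -> Prop) (r : R) : Prop :=
  is_lub (fun s => exists x, A x /\ pt_set_dist d x B s) r.

Definition hausdorff_dist {X : Type} (d : X -> X -> R) (A B : X -> Prop) (r : R) : Prop :=
  exists e1 e2, excess d A B e1 /\ excess d B A e2 /\ r = Rmax e1 e2.

(* (K(X),T_K) proximal: liminf_n d_H(T_K^n A, T_K^n B) = 0 for all A,B in K(X)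
   (d_H >= 0, so liminf = 0 iff d_H < eps infinitely often for every eps). *)
Definition KX_proximal {X : Type} (d : X -> X -> R) (T : X -> X) : Prop :=
  forall A B, in_KX d A -> in_KX d B ->
    forall eps, 0 < eps -> forall N, exists n r, (n >= N)%nat /\
      hausdorff_dist d (img_iter T n A) (img_iter T n B) r /\ r < eps.

Definition diam {X : Type} (d : X -> X -> R) (S : X -> Prop) (r : R) : Prop :=
  is_lub (fun s => exists x y, S x /\ S y /\ s = d x y) r.

Definition fullset {X : Type} : X -> Prop := fun _ => True.

Definition omega_core {X : Type} (T : X -> X) : X -> Prop :=
  fun y => forall n, img_iter T n fullset y.

Definition singleton_set {X : Type} (S : X -> Prop) : Prop :=
  exists x, forall y, S y <-> y = x.

Definition uniformly_proximal_space {X : Type} (d : X -> X -> R) (T : X -> X) : Prop :=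
  forall eps, 0 < eps -> exists n r, diam d (img_iter T n fullset) r /\ r < eps.

(* The three conditions of the theorem are linked through one intermediate
   notion, [shrinking_images]: the images T^n X eventually have arbitrarily
   small size, i.e. for every eps > 0 some n makes all pairs of points of
   T^n X eps-close.  It is condition (3) stated without diameters.

   - (1) -> shrinking: proximality of the pair (X, {x0}) in K(X) gives an n
     with d_H(T^n X, {T^n x0}) < eps/2, so T^n X lies in a small ball.
   - shrinking -> (1): for non-empty A, B the sets T^n A, T^n B lie in the
     small set T^n X, which bounds their Hausdorff distance.
   - shrinking <-> (2): the decreasing sets T^n X are closed (continuous
     images of a compact space), so limits of points taken deeper and deeper
     in the sequence lie in the core \bigcap_n T^n X.  Hence the core is
     non-empty, and two far-apart points at every level produce two far-apart
     points of the core; conversely shrinking forces the core to be a point.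
   - shrinking <-> (3) is a reformulation via least upper bounds. *)

From Pilot Require Import Defs.
From Stdlib Require Import Reals Lra Lia Classical ClassicalEpsilon.
Open Scope R_scope.

Lemma iter_add {X : Type} (T : X -> X) (a b : nat) (x : X) :
  iter (a + b) T x = iter a T (iter b T x).
Proof. induction a as [|a IH]; simpl; congruence. Qed.

Lemma img_iter_antitone {X : Type} (T : X -> X) (m k : nat) (y : X) :
  (k <= m)%nat -> img_iter T m fullset y -> img_iter T k fullset y.
Proof.
  intros Hkm [x [_ Hx]]. exists (iter (m - k) T x). split; [exact I|].
  rewrite <- iter_add. replace (k + (m - k))%nat with m by lia. exact Hx.
Qed.

Lemma img_iter_full {X : Type} (T : X -> X) (n : nat) (A : X -> Prop) (y : X) :
  img_iter T n A y -> img_iter T n fullset y.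
Proof. intros [x [_ Hx]]. exists x. split; [exact I|exact Hx]. Qed.

Lemma strictly_increasing_ge (phi : nat -> nat) :
  (forall n, (phi n < phi (S n))%nat) -> forall n, (n <= phi n)%nat.
Proof. intros Hphi n; induction n as [|n IH]; [lia|]. specialize (Hphi n); lia. Qed.

Lemma seq_conv_reindex {X : Type} (d : X -> X -> R) (u : nat -> X) (l : X)
  (f : nat -> nat) :
  seq_conv d u l -> (forall n, (n <= f n)%nat) -> seq_conv d (fun n => u (f n)) l.
Proof.
  intros Hu Hf eps Heps. destruct (Hu eps Heps) as [N HN]. exists N.
  intros n Hn. apply HN. specialize (Hf n); lia.
Qed.

Section MetricFacts.

Variable X : Type.
Variable d : X -> X -> R.
Hypothesis M : is_metric X d.

Lemma eq_of_dist_small (x y : X) :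
  (forall eps, 0 < eps -> d x y < eps) -> x = y.
Proof.
  intros Hsmall. apply (metric_eq0 _ _ M).
  pose proof (metric_nonneg _ _ M x y).
  destruct (Req_dec (d x y) 0) as [E|E]; [exact E|].
  specialize (Hsmall (d x y) ltac:(lra)). lra.
Qed.

Lemma seq_conv_unique (u : nat -> X) (a b : X) :
  seq_conv d u a -> seq_conv d u b -> a = b.
Proof.
  intros Ha Hb. apply eq_of_dist_small. intros eps Heps.
  destruct (Ha (eps/2) ltac:(lra)) as [N1 H1].
  destruct (Hb (eps/2) ltac:(lra)) as [N2 H2].
  specialize (H1 (max N1 N2) ltac:(lia)). specialize (H2 (max N1 N2) ltac:(lia)).
  pose proof (metric_tri _ _ M a (u (max N1 N2)) b) as Htri.
  rewrite (metric_sym _ _ M a (u (max N1 N2))) in Htri. lra.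
Qed.

Lemma dist_limit_ge (u v : nat -> X) (a b : X) (eps : R) :
  seq_conv d u a -> seq_conv d v b -> (forall n, eps <= d (u n) (v n)) ->
  eps <= d a b.
Proof.
  intros Ha Hb Hge. apply Rnot_lt_le. intro Hlt.
  set (gap := (eps - d a b) / 2).
  destruct (Ha gap ltac:(unfold gap; lra)) as [N1 H1].
  destruct (Hb gap ltac:(unfold gap; lra)) as [N2 H2].
  set (n := max N1 N2).
  specialize (H1 n ltac:(unfold n; lia)). specialize (H2 n ltac:(unfold n; lia)).
  pose proof (metric_tri _ _ M (u n) a (v n)) as Htri1.
  pose proof (metric_tri _ _ M a b (v n)) as Htri2.
  rewrite (metric_sym _ _ M b (v n)) in Htri2.
  pose proof (Hge n). unfold gap in *. lra.
Qed.

Lemma iter_seq_conv (T : X -> X) (k : nat) (u : nat -> X) (l : X) :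
  continuous_map d T -> seq_conv d u l ->
  seq_conv d (fun n => iter k T (u n)) (iter k T l).
Proof.
  intros C Hu. induction k as [|k IH]; simpl; [exact Hu|].
  intros eps Heps. destruct (C (iter k T l) eps Heps) as [delta [Hdelta Hc]].
  destruct (IH delta Hdelta) as [N HN]. exists N. intros n Hn.
  rewrite (metric_sym _ _ M). apply Hc. rewrite (metric_sym _ _ M). auto.
Qed.

End MetricFacts.

(* T^k X is closed: preimages of a convergent sequence have a convergent
   subsequence, whose image under the continuous map T^k gives the limit. *)
Lemma img_iter_closed {X : Type} (d : X -> X -> R) (T : X -> X) (k : nat) :
  TDS d T -> Defs.closed_set d (img_iter T k fullset).
Proof.
  intros [_ [M [K C]]] z l Hz Hzl.
  destruct (choice (fun n x => iter k T x = z n)) as [w Hw].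
  { intro n. destruct (Hz n) as [x [_ Hx]]. exists x. exact Hx. }
  destruct (K w) as [psi [w0 [Hpsi Hw0]]].
  exists w0. split; [exact I|].
  apply (seq_conv_unique X d M (fun n => z (psi n))).
  - intros eps Heps. destruct (iter_seq_conv X d M T k _ _ C Hw0 eps Heps) as [N HN].
    exists N. intros n Hn. rewrite <- Hw. auto.
  - apply seq_conv_reindex; [exact Hzl|exact (strictly_increasing_ge psi Hpsi)].
Qed.

Lemma core_of_limit {X : Type} (d : X -> X -> R) (T : X -> X)
  (z : nat -> X) (f : nat -> nat) (l : X) :
  TDS d T -> (forall n, (n <= f n)%nat) ->
  (forall n, img_iter T (f n) fullset (z n)) -> seq_conv d z l -> omega_core T l.
Proof.
  intros Td Hf Hz Hzl k.
  apply (img_iter_closed d T k Td (fun n => z (n + k)%nat)).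
  - intro n. apply (img_iter_antitone T (f (n + k)%nat)); [|exact (Hz _)].
    specialize (Hf (n + k)%nat); lia.
  - apply seq_conv_reindex; [exact Hzl|intro; lia].
Qed.

(* The core contains the limit of a subsequence of any orbit. *)
Lemma core_nonempty {X : Type} (d : X -> X -> R) (T : X -> X) :
  TDS d T -> exists l, omega_core T l.
Proof.
  intros Td. pose proof Td as [[x0] [_ [K _]]].
  destruct (K (fun n => iter n T x0)) as [phi [l [Hphi Hl]]].
  exists l. apply (core_of_limit d T (fun n => iter (phi n) T x0) phi l Td (strictly_increasing_ge phi Hphi));
    [|exact Hl].
  intro n. exists x0. split; [exact I|reflexivity].
Qed.

(* If every level T^n X contains two eps-apart points, so does the core:
   extract convergent subsequences of both sequences of points. *)
Lemma core_far_pair {X : Type} (d : X -> X -> R) (T : X -> X) (eps : R) :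
  TDS d T ->
  (forall n, exists x y, img_iter T n fullset x /\ img_iter T n fullset y /\
     eps <= d x y) ->
  exists a b, omega_core T a /\ omega_core T b /\ eps <= d a b.
Proof.
  intros Td Hfar. pose proof Td as [_ [M [K _]]].
  destruct (choice (fun n (q : X * X) => img_iter T n fullset (fst q) /\
     img_iter T n fullset (snd q) /\ eps <= d (fst q) (snd q))) as [q Hq].
  { intro n. destruct (Hfar n) as [x [y H]]. exists (x, y). exact H. }
  destruct (K (fun n => fst (q n))) as [phi [a [Hphi Ha]]].
  destruct (K (fun n => snd (q (phi n)))) as [psi [b [Hpsi Hb]]].
  set (f := fun n => phi (psi n)).
  assert (Hf : forall n, (n <= f n)%nat).
  { intro n. pose proof (strictly_increasing_ge phi Hphi (psi n)).
    pose proof (strictly_increasing_ge psi Hpsi n). unfold f; lia. }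
  assert (Ha' : seq_conv d (fun n => fst (q (f n))) a).
  { exact (seq_conv_reindex d _ a psi Ha (strictly_increasing_ge psi Hpsi)). }
  exists a, b. repeat split.
  - apply (core_of_limit d T (fun n => fst (q (f n))) f a Td Hf);
      [intro n; apply Hq|exact Ha'].
  - apply (core_of_limit d T (fun n => snd (q (f n))) f b Td Hf);
      [intro n; apply Hq|exact Hb].
  - apply (dist_limit_ge X d M (fun n => fst (q (f n))) (fun n => snd (q (f n)))
      a b eps Ha' Hb). intro n. apply Hq.
Qed.

Lemma glb_exists_nonneg (E : R -> Prop) :
  (exists x, E x) -> (forall x, E x -> 0 <= x) -> exists m, is_glb E m.
Proof.
  intros [x Ex] Hnonneg.
  destruct (completeness (fun y => E (- y))) as [m [Hub Hleast]].
  - exists 0. intros y Hy. specialize (Hnonneg _ Hy). lra.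
  - exists (- x). rewrite Ropp_involutive. exact Ex.
  - exists (- m). split.
    + intros y Hy. assert (- y <= m); [|lra]. apply Hub. rewrite Ropp_involutive; auto.
    + intros m' Hm'. assert (m <= - m'); [|lra]. apply Hleast. intros y Hy.
      specialize (Hm' _ Hy). lra.
Qed.

Lemma lub_exists_le (E : R -> Prop) (c : R) :
  (exists x, E x) -> (forall x, E x -> x <= c) -> exists m, is_lub E m /\ m <= c.
Proof.
  intros Hne Hbound. destruct (completeness E) as [m [Hub Hleast]]; [|exact Hne|].
  - exists c. exact Hbound.
  - exists m. split; [split; assumption|]. apply Hleast. exact Hbound.
Qed.

Lemma diam_exists_le {X : Type} (d : X -> X -> R) (S : X -> Prop) (c : R) :
  (exists x, S x) -> (forall x y, S x -> S y -> d x y <= c) ->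
  exists r, diam d S r /\ r <= c.
Proof.
  intros [x Sx] Hbound. apply lub_exists_le.
  - exists (d x x), x, x. auto.
  - intros s [a [b [Sa [Sb ->]]]]. auto.
Qed.

Lemma excess_exists_le {X : Type} (d : X -> X -> R) (A B : X -> Prop) (c : R) :
  is_metric X d -> (exists x, A x) -> (exists y, B y) ->
  (forall x y, A x -> B y -> d x y <= c) -> exists r, excess d A B r /\ r <= c.
Proof.
  intros M [x Ax] [y By] Hbound. apply lub_exists_le.
  - destruct (glb_exists_nonneg (fun s => exists y, B y /\ s = d x y)) as [s Hs].
    + exists (d x y). eauto.
    + intros s [z [_ ->]]. apply (metric_nonneg _ _ M).
    + exists s, x. auto.
  - intros s [a [Aa [Hlb _]]]. apply Rle_trans with (d a y); [|auto].
    apply Hlb. eauto.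
Qed.

Lemma hausdorff_exists_le {X : Type} (d : X -> X -> R) (A B : X -> Prop) (c : R) :
  is_metric X d -> (exists x, A x) -> (exists y, B y) ->
  (forall x y, A x -> B y -> d x y <= c) ->
  exists r, hausdorff_dist d A B r /\ r <= c.
Proof.
  intros M HA HB Hbound.
  destruct (excess_exists_le d A B c M HA HB Hbound) as [e1 [H1 L1]].
  destruct (excess_exists_le d B A c M HB HA) as [e2 [H2 L2]].
  { intros x y Bx Ay. rewrite (metric_sym _ _ M). auto. }
  exists (Rmax e1 e2). split; [exists e1, e2; auto|apply Rmax_lub; auto].
Qed.

Definition shrinking_images {X : Type} (d : X -> X -> R) (T : X -> X) : Prop :=
  forall eps, 0 < eps -> exists n, forall x y,
    img_iter T n fullset x -> img_iter T n fullset y -> d x y < eps.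

(* (1) -> shrinking, testing proximality on the pair X, {x0} of K(X): every
   point of T^n X is within d_H(T^n X, {T^n x0}) of T^n x0. *)
Lemma shrinking_of_KX_proximal {X : Type} (d : X -> X -> R) (T : X -> X) :
  TDS d T -> KX_proximal d T -> shrinking_images d T.
Proof.
  intros [[x0] [M _]] Hprox eps Heps.
  assert (Hfull : in_KX d (@fullset X)).
  { split; [exists x0; exact I|intros u l _ _; exact I]. }
  assert (Hpoint : in_KX d (fun y => y = x0)).
  { split; [exists x0; reflexivity|]. intros u l Hu Hul.
    apply (seq_conv_unique X d M u); [exact Hul|].
    intros e He. exists O. intros n _.
    rewrite Hu, (proj2 (metric_eq0 _ _ M x0 x0) eq_refl). exact He. }
  destruct (Hprox _ _ Hfull Hpoint (eps/2) ltac:(lra) O)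
    as [n [r [_ [[e1 [e2 [[Hexcess _] [_ Hr]]]] Hlt]]]].
  exists n. set (p := iter n T x0).
  assert (Hnear : forall y, img_iter T n fullset y -> d y p <= r).
  { intros y Hy.
    destruct (glb_exists_nonneg
      (fun s => exists z, img_iter T n (fun y => y = x0) z /\ s = d y z))
      as [s [Hlb Hgreatest]].
    - exists (d y p), p. split; [exists x0; auto|reflexivity].
    - intros s [z [_ ->]]. apply (metric_nonneg _ _ M).
    - assert (Hys : d y p <= s).
      { apply Hgreatest. intros s' [z [[x [-> <-]] ->]]. apply Rle_refl. }
      assert (s <= e1) by (apply Hexcess; exists y; split; [exact Hy|split; assumption]).
      pose proof (Rmax_l e1 e2). lra. }
  intros x y Hx Hy.
  pose proof (metric_tri _ _ M x p y) as Htri.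
  rewrite (metric_sym _ _ M p y) in Htri.
  pose proof (Hnear x Hx). pose proof (Hnear y Hy). lra.
Qed.

(* shrinking -> (1): beyond N, the sets T^n A, T^n B sit inside a small T^n X. *)
Lemma KX_proximal_of_shrinking {X : Type} (d : X -> X -> R) (T : X -> X) :
  TDS d T -> shrinking_images d T -> KX_proximal d T.
Proof.
  intros [_ [M _]] Hshrink A B [[a Aa] _] [[b Bb] _] eps Heps N.
  destruct (Hshrink (eps/2) ltac:(lra)) as [n0 Hn0].
  set (n := max N n0).
  destruct (hausdorff_exists_le d (img_iter T n A) (img_iter T n B) (eps/2) M)
    as [r [Hr Hle]].
  - exists (iter n T a), a. auto.
  - exists (iter n T b), b. auto.
  - intros x y Hx Hy. left. apply Hn0;
      apply (img_iter_antitone T n); unfold n; try lia; eapply img_iter_full; eauto.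
  - exists n, r. repeat split; [unfold n; lia|exact Hr|lra].
Qed.

(* shrinking -> (2): the core is non-empty, and any two of its points lie in
   every T^n X, hence are arbitrarily close. *)
Lemma singleton_core_of_shrinking {X : Type} (d : X -> X -> R) (T : X -> X) :
  TDS d T -> shrinking_images d T -> singleton_set (omega_core T).
Proof.
  intros Td Hshrink. pose proof Td as [_ [M _]].
  destruct (core_nonempty d T Td) as [l Hl].
  exists l. intro y. split; [|intros ->; exact Hl].
  intro Hy. apply (eq_of_dist_small X d M). intros eps Heps.
  destruct (Hshrink eps Heps) as [n Hn]. apply Hn; auto.
Qed.

(* (2) -> shrinking: otherwise [core_far_pair] gives two distinct core points. *)
Lemma shrinking_of_singleton_core {X : Type} (d : X -> X -> R) (T : X -> X) :
  TDS d T -> singleton_set (omega_core T) -> shrinking_images d T.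
Proof.
  intros Td [p Hp] eps Heps. pose proof Td as [_ [M _]].
  apply NNPP. intro Hnot.
  destruct (core_far_pair d T eps Td) as [a [b [Ha [Hb Hab]]]].
  { intro n. apply NNPP. intro Hclose. apply Hnot. exists n. intros x y Hx Hy.
    apply Rnot_le_lt. intro Hxy. apply Hclose. exists x, y. auto. }
  apply Hp in Ha. apply Hp in Hb. subst a b.
  rewrite (proj2 (metric_eq0 _ _ M p p) eq_refl) in Hab. lra.
Qed.

Lemma shrinking_iff_uniformly_proximal {X : Type} (d : X -> X -> R) (T : X -> X) :
  TDS d T -> (shrinking_images d T <-> uniformly_proximal_space d T).
Proof.
  intros [[x0] _]. split.
  - intros Hshrink eps Heps. destruct (Hshrink (eps/2) ltac:(lra)) as [n Hn].
    destruct (diam_exists_le d (img_iter T n fullset) (eps/2)) as [r [Hr Hle]].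
    + exists (iter n T x0), x0. split; [exact I|reflexivity].
    + intros x y Hx Hy. left. auto.
    + exists n, r. split; [exact Hr|lra].
  - intros Hunif eps Heps. destruct (Hunif eps Heps) as [n [r [[Hub _] Hlt]]].
    exists n. intros x y Hx Hy.
    assert (d x y <= r) by (apply Hub; exists x, y; auto). lra.
Qed.

Theorem mainTheorem11 (X : Type) (d : X -> X -> R) (T : X -> X) :
  TDS d T ->
  (KX_proximal d T <-> singleton_set (omega_core T)) /\
  (singleton_set (omega_core T) <-> uniformly_proximal_space d T).
Proof.
  intros Td.
  assert (Hcore : shrinking_images d T <-> singleton_set (omega_core T)).
  { split; [apply singleton_core_of_shrinking|apply shrinking_of_singleton_core];
      exact Td. }
  assert (Hprox : shrinking_images d T <-> KX_proximal d T).
  { split; [apply KX_proximal_of_shrinking|apply shrinking_of_KX_proximal];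
      exact Td. }
  pose proof (shrinking_iff_uniformly_proximal d T Td) as Hunif.
  split; [rewrite <- Hprox, <- Hcore|rewrite <- Hunif, <- Hcore]; reflexivity.
Qed.
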